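(* Let $\{z_n\}_{n\ge 0}$ be a sequence of positive real numbers satisfying $$(\alpha_1n+\alpha_0)z_{n+1}=(\beta_1n+\beta_0)z_n-(\gamma_1n+\gamma_0)z_{n-1}\quad (n\ge 1),$$ where $\alpha_1n+\alpha_0$, $\beta_1n+\beta_0$, $\gamma_1n+\gamma_0$ are positive for all $n\ge 1$. Put $A=\beta_0\gamma_1-\beta_1\gamma_0$, $B=\gamma_0\alpha_1-\gamma_1\alpha_0$, $C=\alpha_0\beta_1-\alpha_1\beta_0$. Suppose $z_0z_2\ge z_1^2$. Then $\{z_n\}_{n\ge 0}$ is log-convex if one of the following holds: (i) $B\ge 0$ and $C\ge 0$; (ii) $B<0$, $C>0$, $AC\ge B^2$ and $z_0B+z_1C\ge 0$; (iii) $B>0$, $C<0$, $AC\le B^2$ and $z_0B+z_1C\ge 0$.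
   Context: A sequence $a_0,a_1,\ldots$ of nonnegative real numbers is log-convex if $a_{k-1}a_{k+1}\ge a_k^2$ for all $k\ge 1$. *)

From Stdlib Require Import Reals.
Open Scope R_scope.

Definition log_convex (a : nat -> R) : Prop :=
  (forall n, 0 <= a n) /\
  (forall k : nat, (1 <= k)%nat -> a (k - 1)%nat * a (k + 1)%nat >= a k ^ 2).

(* Log-convexity of a positive sequence is monotonicity of its ratios
   x_n = z_{n+1}/z_n, which satisfy the Riccati-type recurrence
   a_n x_{n-1} x_n = b_n x_{n-1} - g_n.  Combining two consecutive instances
   shows that x_{n-1} <= x_n forces x_n <= x_{n+1} as soon as
   C x_{n-1} + B >= 0, because the discrete Wronskians of the affine
   coefficients are the constants B and C.  In cases (i) and (ii) this
   condition holds because the ratios only increase; in case (iii) it says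
   x_n <= -B/C, a bound that the recurrence propagates when A C <= B^2. *)
From Stdlib Require Import Reals Lra Psatz.
Open Scope R_scope.

Definition ratio (z : nat -> R) (n : nat) : R := z (S n) / z n.

Definition affine (p1 p0 : R) (n : nat) : R := p1 * INR n + p0.

Lemma ratio_pos (z : nat -> R) : (forall n, 0 < z n) -> forall n, 0 < ratio z n.
Proof. intros hz n; apply Rdiv_lt_0_compat; apply hz. Qed.

Lemma log_convex_at_iff_ratio_le (z : nat -> R) (hz : forall n, 0 < z n) (n : nat) :
  z n * z (S (S n)) >= z (S n) ^ 2 <-> ratio z n <= ratio z (S n).
Proof.
  pose proof (hz n); pose proof (hz (S n)).
  assert (E : z n * z (S (S n)) - z (S n) ^ 2 =
              z n * z (S n) * (ratio z (S n) - ratio z n))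
    by (unfold ratio; field; lra).
  assert (0 < z n * z (S n)) by (apply Rmult_lt_0_compat; lra).
  split; intro hle; nra.
Qed.

Lemma log_convex_of_ratio_nondecreasing (z : nat -> R) (hz : forall n, 0 < z n) :
  (forall n, ratio z n <= ratio z (S n)) -> log_convex z.
Proof.
  intros hmono; split; [intro n; left; apply hz|].
  intros [|m] hm; [lia|].
  replace (S m - 1)%nat with m by lia; replace (S m + 1)%nat with (S (S m)) by lia.
  apply log_convex_at_iff_ratio_le; auto.
Qed.

Lemma ratio_recurrence (alpha beta gamma z : nat -> R) (hz : forall n, 0 < z n)
  (hrec : forall n, (1 <= n)%nat ->
     alpha n * z (S n) = beta n * z n - gamma n * z (n - 1)%nat) (m : nat) :
  alpha (S m) * ratio z m * ratio z (S m) = beta (S m) * ratio z m - gamma (S m).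
Proof.
  pose proof (hrec (S m) ltac:(lia)) as H.
  replace (S m - 1)%nat with m in H by lia.
  pose proof (hz m); pose proof (hz (S m)).
  unfold ratio.
  transitivity (alpha (S m) * z (S (S m)) / z m); [field; lra|].
  rewrite H; field; lra.
Qed.

Lemma affine_wronskian (p1 p0 q1 q0 : R) (n : nat) :
  affine p1 p0 n * affine q1 q0 (S n) - affine p1 p0 (S n) * affine q1 q0 n =
  p0 * q1 - p1 * q0.
Proof. unfold affine; rewrite S_INR; ring. Qed.

(* The three Wronskians are the cofactors of a determinant with two equal rows. *)
Lemma affine_wronskian_cycle (a1 a0 b1 b0 g1 g0 : R) (n : nat) :
  affine a1 a0 n * (b0 * g1 - b1 * g0) + affine b1 b0 n * (g0 * a1 - g1 * a0)
  + affine g1 g0 n * (a0 * b1 - a1 * b0) = 0.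
Proof. unfold affine; ring. Qed.

(* [v], [u], [w] stand for three consecutive ratios; the primed coefficients
   belong to the earlier index. *)
Lemma ratio_step (a b g a' b' g' v u w : R) :
  0 < a -> 0 < g -> 0 < a' -> 0 < v -> v <= u ->
  a' * v * u = b' * v - g' -> a * u * w = b * u - g ->
  (a' * b - a * b') * v + (a * g' - a' * g) >= 0 -> u <= w.
Proof.
  intros ha hg ha' hv hvu hvu_rec huw_rec hw.
  assert (E : a * u * v * a' * (w - u) =
              u * ((a' * b - a * b') * v + (a * g' - a' * g)) + a' * g * (u - v)).
  { transitivity (a' * v * (a * u * w) - a * u * (a' * v * u)); [ring|].
    rewrite hvu_rec, huw_rec; ring. }
  assert (0 < a * u * v * a') by (repeat apply Rmult_lt_0_compat; lra).
  assert (0 <= a' * g * (u - v)) by (apply Rmult_le_pos; nra).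
  nra.
Qed.

Lemma ratio_bound (a b g u w r : R) :
  0 < a -> 0 < g -> 0 < u -> u <= r ->
  a * u * w = b * u - g -> a * r ^ 2 - b * r + g >= 0 -> w <= r.
Proof.
  intros ha hg hu hur huw_rec hr.
  assert (E : a * u * r * (r - w) = u * (a * r ^ 2 - b * r + g) + g * (r - u)).
  { transitivity (r * (a * u * r) - r * (a * u * w)); [ring|].
    rewrite huw_rec; ring. }
  assert (0 < a * u * r) by (repeat apply Rmult_lt_0_compat; lra).
  assert (0 <= g * (r - u)) by (apply Rmult_le_pos; lra).
  nra.
Qed.

Section AffineRatioRecurrence.

Variables a1 a0 b1 b0 g1 g0 : R.
Variable x : nat -> R.

Local Notation A := (b0 * g1 - b1 * g0).
Local Notation B := (g0 * a1 - g1 * a0).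
Local Notation C := (a0 * b1 - a1 * b0).

Hypothesis hx : forall n, 0 < x n.
Hypothesis ha : forall n, (1 <= n)%nat -> 0 < affine a1 a0 n.
Hypothesis hg : forall n, (1 <= n)%nat -> 0 < affine g1 g0 n.
Hypothesis hrec : forall m,
  affine a1 a0 (S m) * x m * x (S m) = affine b1 b0 (S m) * x m - affine g1 g0 (S m).

Lemma ratio_nondecreasing :
  x 0%nat <= x 1%nat -> (forall m, x 0%nat <= x m -> C * x m + B >= 0) ->
  forall m, x m <= x (S m).
Proof.
  intros h01 hwr.
  enough (H : forall m, x 0%nat <= x m /\ x m <= x (S m)) by apply H.
  induction m as [|m [h0m hm]]; [split; lra|].
  split; [lra|].
  apply (ratio_step (affine a1 a0 (S (S m))) (affine b1 b0 (S (S m))) (affine g1 g0 (S (S m)))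
           (affine a1 a0 (S m)) (affine b1 b0 (S m)) (affine g1 g0 (S m)) (x m));
    auto with arith.
  rewrite affine_wronskian.
  replace (affine a1 a0 (S (S m)) * affine g1 g0 (S m)
           - affine a1 a0 (S m) * affine g1 g0 (S (S m)))
    with B by (rewrite <- (affine_wronskian g1 g0 a1 a0 (S m)); ring).
  auto.
Qed.

Lemma ratio_wronskian_nonneg_of_C_neg :
  C < 0 -> A * C <= B ^ 2 -> C * x 0%nat + B >= 0 -> forall m, C * x m + B >= 0.
Proof.
  intros hC hAC h0.
  set (r := - B / C).
  assert (hCr : C * r = - B) by (unfold r; field; lra).
  assert (hr : forall n, (1 <= n)%nat ->
            affine a1 a0 n * r ^ 2 - affine b1 b0 n * r + affine g1 g0 n >= 0).
  { intros n hn.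
    assert (E : C ^ 2 * (affine a1 a0 n * r ^ 2 - affine b1 b0 n * r + affine g1 g0 n) =
                affine a1 a0 n * (B ^ 2 - A * C)).
    { transitivity (affine a1 a0 n * (C * r) ^ 2 - affine b1 b0 n * C * (C * r)
                    + affine g1 g0 n * C ^ 2); [ring|].
      rewrite hCr.
      pose proof (affine_wronskian_cycle a1 a0 b1 b0 g1 g0 n); nra. }
    assert (0 < C ^ 2) by nra.
    pose proof (ha n hn); nra. }
  enough (H : forall m, x m <= r) by (intro m; pose proof (H m); nra).
  induction m as [|m IH]; [nra|].
  apply (ratio_bound (affine a1 a0 (S m)) (affine b1 b0 (S m)) (affine g1 g0 (S m)) (x m));
    auto with arith.
Qed.

End AffineRatioRecurrence.

Theorem theorem3p10 (z : nat -> R)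
  (a1 a0 b1 b0 g1 g0 : R)
  (hz : forall n, 0 < z n)
  (hrec : forall n : nat, (1 <= n)%nat ->
     (a1 * INR n + a0) * z (S n) =
     (b1 * INR n + b0) * z n - (g1 * INR n + g0) * z (n - 1)%nat)
  (ha : forall n : nat, (1 <= n)%nat -> 0 < a1 * INR n + a0)
  (hb : forall n : nat, (1 <= n)%nat -> 0 < b1 * INR n + b0)
  (hg : forall n : nat, (1 <= n)%nat -> 0 < g1 * INR n + g0)
  (h02 : z 0%nat * z 2%nat >= z 1%nat ^ 2) :
  let A := b0 * g1 - b1 * g0 in
  let B := g0 * a1 - g1 * a0 in
  let C := a0 * b1 - a1 * b0 in
  ( (B >= 0 /\ C >= 0)
    \/ (B < 0 /\ C > 0 /\ A * C >= B ^ 2 /\ z 0%nat * B + z 1%nat * C >= 0)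
    \/ (B > 0 /\ C < 0 /\ A * C <= B ^ 2 /\ z 0%nat * B + z 1%nat * C >= 0) ) ->
  log_convex z.
Proof.
  intros A B C hcase.
  pose proof (ratio_pos z hz) as hx.
  pose proof (ratio_recurrence (affine a1 a0) (affine b1 b0) (affine g1 g0) z hz hrec)
    as hxrec.
  assert (h01 : ratio z 0 <= ratio z 1) by (apply log_convex_at_iff_ratio_le; auto).
  assert (hinit : z 0%nat * B + z 1%nat * C >= 0 -> C * ratio z 0 + B >= 0).
  { intro H; pose proof (hz 0%nat); unfold ratio.
    replace (C * (z 1%nat / z 0%nat) + B) with ((z 0%nat * B + z 1%nat * C) / z 0%nat)
      by (field; lra).
    apply Rle_ge, Rmult_le_pos; [lra | left; apply Rinv_0_lt_compat; lra]. }
  apply log_convex_of_ratio_nondecreasing; [exact hz|].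
  apply (ratio_nondecreasing a1 a0 b1 b0 g1 g0 (ratio z) hx ha hg hxrec h01).
  unfold A, B, C in *.
  destruct hcase as [[hB hC] | [[hB [hC [_ h0]]] | [hB [hC [hAC h0]]]]];
    intros m hm; pose proof (hx m).
  - nra.
  - pose proof (hinit h0); nra.
  - exact (ratio_wronskian_nonneg_of_C_neg a1 a0 b1 b0 g1 g0 (ratio z) hx ha hg hxrec
             hC hAC (hinit h0) m).
Qed.
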